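(* Let $a,b\in\mathbb{C}$ be such that $X=X_{a,b}$ is smooth. If $a^2-ab+b^2\neq0$, then neither $\pi_x$ nor $\pi_y$ contracts any curve. If $a\neq b$, then $\pi_z$ contracts no curve.
   Context: $X_{a,b}\subset\mathbb{P}^1_x\times\mathbb{P}^1_y\times\mathbb{P}^1_z$ is the surface defined by $Q_a z_0^2+(x_0^2y_0^2+x_1^2y_1^2)z_0z_1+Q_b z_1^2=0$ with $Q_c=x_0^2y_1^2+c\,x_0x_1y_0y_1+x_1^2y_0^2$. $\pi_x:X\to\mathbb{P}^1_y\times\mathbb{P}^1_z$, $\pi_y:X\to\mathbb{P}^1_x\times\mathbb{P}^1_z$, $\pi_z:X\to\mathbb{P}^1_x\times\mathbb{P}^1_y$ are the restrictions of the projections. *)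

From HB Require Import structures.
From mathcomp Require Import all_boot all_order all_algebra.
From mathcomp Require Import complex.
From mathcomp Require Import Rstruct.
Set Implicit Arguments. Unset Strict Implicit. Unset Printing Implicit Defensive.
Import Order.TTheory GRing.Theory Num.Theory.
Local Open Scope ring_scope.

Notation CC := (complex Rdefinitions.R).

Definition Qc (K : comNzRingType) (c x0 x1 y0 y1 : K) : K :=
  x0 ^+ 2 * y1 ^+ 2 + c * x0 * x1 * y0 * y1 + x1 ^+ 2 * y0 ^+ 2.

Definition Fab (K : comNzRingType) (a b x0 x1 y0 y1 z0 z1 : K) : K :=
  Qc a x0 x1 y0 y1 * z0 ^+ 2
  + (x0 ^+ 2 * y0 ^+ 2 + x1 ^+ 2 * y1 ^+ 2) * z0 * z1
  + Qc b x0 x1 y0 y1 * z1 ^+ 2.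

(* A point of P^1(C) is represented by a nonzero pair of homogeneous coordinates;
   two representatives give the same point iff they are proportional. *)
Definition nz (p : CC * CC) : Prop := p <> (0, 0).
Definition proportional (p q : CC * CC) : Prop := p.1 * q.2 = p.2 * q.1.

Definition onX (a b : CC) (x y z : CC * CC) : Prop :=
  nz x /\ nz y /\ nz z /\ Fab a b x.1 x.2 y.1 y.2 z.1 z.2 = 0.

(* Formal partial derivatives of F (computed via univariate formal
   derivatives, the other variables being treated as constants). *)
Definition cP (t : CC) : {poly CC} := t%:P.
Definition dF_x0 (a b x0 x1 y0 y1 z0 z1 : CC) : CC :=
  (Fab (cP a) (cP b) 'X (cP x1) (cP y0) (cP y1) (cP z0) (cP z1))^`().[x0].
Definition dF_x1 (a b x0 x1 y0 y1 z0 z1 : CC) : CC :=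
  (Fab (cP a) (cP b) (cP x0) 'X (cP y0) (cP y1) (cP z0) (cP z1))^`().[x1].
Definition dF_y0 (a b x0 x1 y0 y1 z0 z1 : CC) : CC :=
  (Fab (cP a) (cP b) (cP x0) (cP x1) 'X (cP y1) (cP z0) (cP z1))^`().[y0].
Definition dF_y1 (a b x0 x1 y0 y1 z0 z1 : CC) : CC :=
  (Fab (cP a) (cP b) (cP x0) (cP x1) (cP y0) 'X (cP z0) (cP z1))^`().[y1].
Definition dF_z0 (a b x0 x1 y0 y1 z0 z1 : CC) : CC :=
  (Fab (cP a) (cP b) (cP x0) (cP x1) (cP y0) (cP y1) 'X (cP z1))^`().[z0].
Definition dF_z1 (a b x0 x1 y0 y1 z0 z1 : CC) : CC :=
  (Fab (cP a) (cP b) (cP x0) (cP x1) (cP y0) (cP y1) (cP z0) 'X)^`().[z1].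

(* X_{a,b} is smooth: at every point of X some partial derivative of F is
   nonzero (Jacobian criterion for a hypersurface in (P^1)^3; by the Euler
   relations this is equivalent to the affine-chart criterion). *)
Definition smooth (a b : CC) : Prop :=
  forall x y z : CC * CC, onX a b x y z ->
    let: (x0, x1) := x in let: (y0, y1) := y in let: (z0, z1) := z in
    ~ (dF_x0 a b x0 x1 y0 y1 z0 z1 = 0 /\ dF_x1 a b x0 x1 y0 y1 z0 z1 = 0 /\
       dF_y0 a b x0 x1 y0 y1 z0 z1 = 0 /\ dF_y1 a b x0 x1 y0 y1 z0 z1 = 0 /\
       dF_z0 a b x0 x1 y0 y1 z0 z1 = 0 /\ dF_z1 a b x0 x1 y0 y1 z0 z1 = 0).

(* A fiber "contains infinitely many distinct points of P^1": an injective
   (up to proportionality) sequence of representatives. *)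
Definition infinite_P1 (P : CC * CC -> Prop) : Prop :=
  exists s : nat -> CC * CC,
    (forall n, nz (s n) /\ P (s n)) /\
    (forall m n, m <> n -> ~ proportional (s m) (s n)).

(* pi contracts a curve  <=>  some fiber of pi (a closed subset of X) is
   positive-dimensional  <=>  some fiber is infinite. *)
Definition contracts_x (a b : CC) : Prop :=
  exists y z, nz y /\ nz z /\ infinite_P1 (fun x => onX a b x y z).
Definition contracts_y (a b : CC) : Prop :=
  exists x z, nz x /\ nz z /\ infinite_P1 (fun y => onX a b x y z).
Definition contracts_z (a b : CC) : Prop :=
  exists x y, nz x /\ nz y /\ infinite_P1 (fun z => onX a b x y z).

(* Every fibre of the three projections is the zero set in P^1 of a binary
   quadratic form whose coefficients depend on the base point, and a nonzero
   binary quadratic form has at most two zeros in P^1; so a fibre is infinite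
   only if all three coefficients vanish.
   Over (x, y) the coefficients are Q_a, x0^2 y0^2 + x1^2 y1^2 and Q_b; since
   Q_a - Q_b = (a - b) x0 x1 y0 y1, for a <> b their vanishing forces
   x0 y0 = x1 y1 = x0 y1 = x1 y0 = 0, i.e. x = 0 or y = 0.
   F is symmetric in x and y, so pi_y behaves like pi_x.  Over (y, z), with
   s = z0^2 + z1^2 and w = z0 z1, the coefficients are y1^2 s + y0^2 w,
   y0 y1 (a z0^2 + b z1^2) and y0^2 s + y1^2 w; their vanishing forces
   y0 y1 <> 0, s^2 = w^2 and a z0^2 + b z1^2 = 0.  As
   s^2 - w^2 = z0^4 + z0^2 z1^2 + z1^4, the point T = (z0/z1)^2 is then a
   common root of T^2 + T + 1 and a T + b, whose resultant is a^2 - ab + b^2. *)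
From HB Require Import structures.
From mathcomp Require Import all_boot all_order all_algebra.
From mathcomp Require Import complex Rstruct.
From mathcomp Require Import ring.
Import Order.TTheory GRing.Theory Num.Theory.
Set Implicit Arguments. Unset Strict Implicit. Unset Printing Implicit Defensive.
Local Open Scope ring_scope.

Lemma pair_neq0 (K : zmodType) (u v : K) : ((u, v) != 0) = (u != 0) || (v != 0).
Proof. by rewrite -negb_and xpair_eqE. Qed.

Lemma sqr_add_sqr_eq0 (K : idomainType) (u v : K) :
  u ^+ 2 + v ^+ 2 = 0 -> u * v = 0 -> u = 0 /\ v = 0.
Proof.
move=> sum0 prod0.
have u4 : u ^+ 4 = 0.
  have -> : u ^+ 4 = u ^+ 2 * (u ^+ 2 + v ^+ 2) - (u * v) ^+ 2 by ring.
  by rewrite sum0 prod0; ring.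
have u0 : u = 0 by apply/eqP; move/eqP: u4; rewrite expf_eq0.
split=> //; apply/eqP; rewrite -sqrf_eq0 -sum0 u0; apply/eqP; ring.
Qed.

Lemma mulf_eq0l (K : idomainType) (x y : K) : x != 0 -> x * y = 0 -> y = 0.
Proof. by move=> x_neq0 /eqP; rewrite mulf_eq0 (negbTE x_neq0) => /eqP. Qed.

Definition qform (K : comNzRingType) (A B C : K) (t : K * K) : K :=
  A * t.1 ^+ 2 + B * t.1 * t.2 + C * t.2 ^+ 2.

Definition cross (K : comNzRingType) (p q : K * K) : K := p.1 * q.2 - p.2 * q.1.

Section BinaryQuadraticForm.
Variable K : idomainType.

Let Delta (p q r : K * K) : K := cross p q * cross q r * cross r p.

(* Cramer's rule for the linear system in (A, B, C) given by the values of the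
   form at p, q, r: its determinant is Delta p q r. *)
Lemma qform_cramer_A (A B C : K) (p q r : K * K) :
  Delta p q r * A =
  - (q.2 * r.2 * cross q r * qform A B C p + r.2 * p.2 * cross r p * qform A B C q
     + p.2 * q.2 * cross p q * qform A B C r).
Proof. by case: p q r => [? ?] [? ?] [? ?]; rewrite /Delta /cross /qform /=; ring. Qed.

Lemma qform_cramer_B (A B C : K) (p q r : K * K) :
  Delta p q r * B =
  (q.1 * r.2 + q.2 * r.1) * cross q r * qform A B C p
  + (r.1 * p.2 + r.2 * p.1) * cross r p * qform A B C q
  + (p.1 * q.2 + p.2 * q.1) * cross p q * qform A B C r.
Proof. by case: p q r => [? ?] [? ?] [? ?]; rewrite /Delta /cross /qform /=; ring. Qed.

Lemma qform_cramer_C (A B C : K) (p q r : K * K) :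
  Delta p q r * C =
  - (q.1 * r.1 * cross q r * qform A B C p + r.1 * p.1 * cross r p * qform A B C q
     + p.1 * q.1 * cross p q * qform A B C r).
Proof. by case: p q r => [? ?] [? ?] [? ?]; rewrite /Delta /cross /qform /=; ring. Qed.

Lemma qform_eq0 (A B C : K) (p q r : K * K) :
  cross p q != 0 -> cross q r != 0 -> cross r p != 0 ->
  qform A B C p = 0 -> qform A B C q = 0 -> qform A B C r = 0 ->
  [/\ A = 0, B = 0 & C = 0].
Proof.
move=> pq qr rp fp fq fr.
have Delta_neq0 : Delta p q r != 0 by rewrite !mulf_neq0.
split; apply: (mulf_eq0l Delta_neq0); [rewrite (qform_cramer_A A B C) |
  rewrite (qform_cramer_B A B C) | rewrite (qform_cramer_C A B C)];
  by rewrite fp fq fr; ring.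
Qed.

End BinaryQuadraticForm.

Lemma common_root_resultant_eq0 (K : idomainType) (a b : K) (t : K * K) :
  t != 0 -> t.1 ^+ 2 + t.1 * t.2 + t.2 ^+ 2 = 0 -> a * t.1 + b * t.2 = 0 ->
  a ^+ 2 - a * b + b ^+ 2 = 0.
Proof.
case: t => [Z W] /=; rewrite pair_neq0 => t_neq0 cyclo0 lin0.
have W_neq0 : W != 0.
  apply: contraTneq t_neq0 => W0; rewrite W0 eqxx orbF negbK -sqrf_eq0.
  by apply/eqP; rewrite -cyclo0 W0; ring.
apply: (mulf_eq0l (expf_neq0 2 W_neq0)).
have -> : W ^+ 2 * (a ^+ 2 - a * b + b ^+ 2) =
  a ^+ 2 * (Z ^+ 2 + Z * W + W ^+ 2) + (b * W - a * Z - a * W) * (a * Z + b * W).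
  by ring.
by rewrite cyclo0 lin0; ring.
Qed.

Section FibreCoefficients.
Variable K : idomainType.
Implicit Types (a b : K) (x y z : K * K).

Lemma x_fibre_coefs_eq0 a b y z : y != 0 -> z != 0 ->
  y.2 ^+ 2 * (z.1 ^+ 2 + z.2 ^+ 2) + y.1 ^+ 2 * (z.1 * z.2) = 0 ->
  y.1 * y.2 * (a * z.1 ^+ 2 + b * z.2 ^+ 2) = 0 ->
  y.1 ^+ 2 * (z.1 ^+ 2 + z.2 ^+ 2) + y.2 ^+ 2 * (z.1 * z.2) = 0 ->
  a ^+ 2 - a * b + b ^+ 2 = 0.
Proof.
case: y z => [y0 y1] [z0 z1] /= y_neq0 z_neq0.
set s := z0 ^+ 2 + z1 ^+ 2; set w := z0 * z1 => eA eB eC.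
have s_or_w_neq0 : s = 0 -> w = 0 -> False.
  move=> s0 w0; have [z00 z10] := sqr_add_sqr_eq0 s0 w0.
  by move: z_neq0; rewrite z00 z10 eqxx.
have y0_neq0 : y0 != 0.
  apply/eqP => y00; move: y_neq0; rewrite pair_neq0 y00 eqxx /= => y1_neq0.
  apply: s_or_w_neq0; apply: (mulf_eq0l (expf_neq0 2 y1_neq0)).
    by rewrite -eA y00; ring.
  by rewrite -eC y00; ring.
have y1_neq0 : y1 != 0.
  apply/eqP => y10; apply: s_or_w_neq0; apply: (mulf_eq0l (expf_neq0 2 y0_neq0)).
    by rewrite -eC y10; ring.
  by rewrite -eA y10; ring.
have lin0 : a * z0 ^+ 2 + b * z1 ^+ 2 = 0 by apply: mulf_eq0l eB; rewrite mulf_neq0.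
have sw2 : s ^+ 2 - w ^+ 2 = 0.
  apply: (mulf_eq0l (mulf_neq0 (expf_neq0 2 y0_neq0) (expf_neq0 2 y1_neq0))).
  have -> : y0 ^+ 2 * y1 ^+ 2 * (s ^+ 2 - w ^+ 2) =
    y0 ^+ 2 * s * (y1 ^+ 2 * s + y0 ^+ 2 * w) - y0 ^+ 2 * w * (y0 ^+ 2 * s + y1 ^+ 2 * w).
    by ring.
  by rewrite eA eC; ring.
apply: (@common_root_resultant_eq0 _ a b (z0 ^+ 2, z1 ^+ 2)) => //=.
  by rewrite pair_neq0 !sqrf_eq0 -pair_neq0.
by rewrite -sw2 /s /w; ring.
Qed.

Lemma z_fibre_coefs_eq0 a b x y : a != b ->
  Qc a x.1 x.2 y.1 y.2 = 0 ->
  x.1 ^+ 2 * y.1 ^+ 2 + x.2 ^+ 2 * y.2 ^+ 2 = 0 ->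
  Qc b x.1 x.2 y.1 y.2 = 0 ->
  x = 0 \/ y = 0.
Proof.
case: x y => [x0 x1] [y0 y1] /= a_neq_b eA eB eC.
have prod0 : x0 * x1 * y0 * y1 = 0.
  apply: (mulf_eq0l (_ : a - b != 0)); first by rewrite subr_eq0.
  have -> : (a - b) * (x0 * x1 * y0 * y1) = Qc a x0 x1 y0 y1 - Qc b x0 x1 y0 y1.
    by rewrite /Qc; ring.
  by rewrite eA eC subr0.
have [e00 e11] : x0 * y0 = 0 /\ x1 * y1 = 0.
  by apply: sqr_add_sqr_eq0; [rewrite -eB | rewrite -prod0]; ring.
have [e01 e10] : x0 * y1 = 0 /\ x1 * y0 = 0.
  apply: sqr_add_sqr_eq0; last by rewrite -prod0; ring.
  have -> : (x0 * y1) ^+ 2 + (x1 * y0) ^+ 2 =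
    Qc a x0 x1 y0 y1 - a * (x0 * x1 * y0 * y1) by rewrite /Qc; ring.
  by rewrite eA prod0; ring.
have [x00|x0_neq0] := eqVneq x0 0; last first.
  by right; rewrite (mulf_eq0l x0_neq0 e00) (mulf_eq0l x0_neq0 e01).
have [x10|x1_neq0] := eqVneq x1 0; first by left; rewrite x00 x10.
by right; rewrite (mulf_eq0l x1_neq0 e10) (mulf_eq0l x1_neq0 e11).
Qed.

End FibreCoefficients.

Lemma infinite_P1_qform_eq0 (A B C : CC) (P : CC * CC -> Prop) :
  infinite_P1 P -> (forall t, P t -> qform A B C t = 0) ->
  [/\ A = 0, B = 0 & C = 0].
Proof.
move=> [s [s_in s_inj]] P_root.
have cross_neq0 m n : m <> n -> cross (s m) (s n) != 0.
  by move=> mn; rewrite subr_eq0; apply/eqP/s_inj.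
by apply: (qform_eq0 (p := s 0) (q := s 1) (r := s 2));
  do ?[exact: cross_neq0]; apply: P_root; exact: (s_in _).2.
Qed.

Section Contractions.
Variables a b : CC.
Implicit Types x y z : CC * CC.

Lemma onX_swap_xy x y z : onX a b y x z -> onX a b x y z.
Proof.
by move=> [y_nz [x_nz [z_nz F0]]]; do 3 split=> //; rewrite -F0 /Fab /Qc; ring.
Qed.

Lemma onX_qform_x x y z : onX a b x y z ->
  qform (y.2 ^+ 2 * (z.1 ^+ 2 + z.2 ^+ 2) + y.1 ^+ 2 * (z.1 * z.2))
        (y.1 * y.2 * (a * z.1 ^+ 2 + b * z.2 ^+ 2))
        (y.1 ^+ 2 * (z.1 ^+ 2 + z.2 ^+ 2) + y.2 ^+ 2 * (z.1 * z.2)) x = 0.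
Proof. by move=> [_ [_ [_ <-]]]; rewrite /Fab /Qc /qform; ring. Qed.

Lemma onX_qform_z x y z : onX a b x y z ->
  qform (Qc a x.1 x.2 y.1 y.2) (x.1 ^+ 2 * y.1 ^+ 2 + x.2 ^+ 2 * y.2 ^+ 2)
        (Qc b x.1 x.2 y.1 y.2) z = 0.
Proof. by move=> [_ [_ [_ <-]]]; rewrite /Fab /qform; ring. Qed.

Lemma contracts_y_x : contracts_y a b -> contracts_x a b.
Proof.
move=> [x [z [x_nz [z_nz [s [s_in s_inj]]]]]].
exists x, z; do 2 split=> //; exists s; split=> // n.
by have [s_nz /onX_swap_xy] := s_in n.
Qed.

Lemma not_contracts_x : a ^+ 2 - a * b + b ^+ 2 != 0 -> ~ contracts_x a b.
Proof.
move=> ab_neq0 [y [z [y_nz [z_nz fibre_inf]]]].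
have [eA eB eC] := infinite_P1_qform_eq0 fibre_inf (fun x => @onX_qform_x x y z).
by move/eqP: ab_neq0; apply; apply: (x_fibre_coefs_eq0 _ _ eA eB eC); apply/eqP.
Qed.

Lemma not_contracts_z : a != b -> ~ contracts_z a b.
Proof.
move=> a_neq_b [x [y [x_nz [y_nz fibre_inf]]]].
have [eA eB eC] := infinite_P1_qform_eq0 fibre_inf (fun z => @onX_qform_z x y z).
by case: (z_fibre_coefs_eq0 a_neq_b eA eB eC).
Qed.

End Contractions.

Theorem lemma4p2 (a b : CC) :
  smooth a b ->
  (a ^+ 2 - a * b + b ^+ 2 != 0 -> ~ contracts_x a b /\ ~ contracts_y a b) /\
  (a != b -> ~ contracts_z a b).
Proof.
move=> _; split; last exact: not_contracts_z.
move=> ab_neq0; split; first exact: not_contracts_x.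
by move/contracts_y_x; exact: not_contracts_x.
Qed.
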